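(* Let $u\in[-1,1]^k$, and let $\pi$ be a permutation of $[k]$ and $y\in\mathcal{Y}$ with $u\in P_{\pi,y}$. Then $V^u_{\pi,y}:=\{\mathbbm{1}_{\pi,i}\odot y: i\in\{0,\dots,k\},\ \alpha_i(|u|)\neq0\}$ is a subset of $V_{\pi,y}$ with $u\in\mathrm{conv}(V^u_{\pi,y})$, and it has the smallest cardinality among all subsets $W\subseteq V_{\pi,y}$ with $u\in\mathrm{conv}(W)$.
   Context: $[k]=\{1,\dots,k\}$, $\mathcal{Y}=\{-1,1\}^k$; $\odot$ entrywise product, $|u|$ entrywise absolute value. For $i\in\{0,\dots,k\}$, $\mathbbm{1}_{\pi,i}$ is the indicator vector of $\{\pi_1,\dots,\pi_i\}$ ($\mathbbm{1}_{\pi,0}=0$); $V_{\pi,y}=\{\mathbbm{1}_{\pi,i}\odot y:i=0,\dots,k\}$ and $P_{\pi,y}=\mathrm{conv}(V_{\pi,y})$. For $x\in\mathbb{R}^k_+$ ordered by $\pi$ (i.e. $x_{\pi_1}\ge\dots\ge x_{\pi_k}$), $\alpha_0(x)=1-x_{\pi_1}$, $\alpha_i(x)=x_{\pi_i}-x_{\pi_{i+1}}$ for $1\le i\le k-1$, and $\alpha_k(x)=x_{\pi_k}$, so that $x=\sum_{i=0}^k\alpha_i(x)\mathbbm{1}_{\pi,i}$. *)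

From HB Require Import structures.
From mathcomp Require Import all_boot all_order all_algebra all_fingroup.
From mathcomp Require Import finmap.
Set Implicit Arguments. Unset Strict Implicit. Unset Printing Implicit Defensive.
Import Order.TTheory GRing.Theory Num.Theory.
Local Open Scope ring_scope.
Local Open Scope fset_scope.

(* Vectors of R^k are row vectors 'rV[R]_k; coordinates are indexed by 'I_k
   (0-based). A permutation pi of [k] is pi : 'S_k; pi_{i+1} (1-based) is
   pi (i) (0-based). *)

Definition emul (R : ringType) k (u v : 'rV[R]_k) : 'rV[R]_k :=
  \row_j (u 0 j * v 0 j).

Definition eabs (R : numDomainType) k (u : 'rV[R]_k) : 'rV[R]_k :=
  \row_j `|u 0 j|.

(* indicator vector 1_{pi,i} of {pi_1, ..., pi_i}, i in {0..k} *)
Definition ind (R : ringType) k (pi : 'S_k) (i : nat) : 'rV[R]_k :=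
  \row_j (if (nat_of_ord ((pi^-1)%g j) < i)%N then 1 else 0).

Definition vert (R : ringType) k (pi : 'S_k) (y : 'rV[R]_k) (i : nat) : 'rV[R]_k :=
  emul (ind R pi i) y.

Definition is_sign_vec (R : ringType) k (y : 'rV[R]_k) : Prop :=
  forall j, y 0 j = 1 \/ y 0 j = -1.

Definition Vset (R : realFieldType) k (pi : 'S_k) (y : 'rV[R]_k)
  : {fset 'rV[R]_k} :=
  [fset vert pi y (nat_of_ord i) | i in 'I_k.+1].

Definition in_conv (R : realFieldType) k (W : {fset 'rV[R]_k}) (u : 'rV[R]_k)
  : Prop :=
  exists lam : 'rV[R]_k -> R,
    (forall w, w \in W -> 0 <= lam w) /\
    \sum_(w <- W) lam w = 1 /\
    u = \sum_(w <- W) lam w *: w.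

(* x_{pi_{j+1}} (0-based position j) if j < k, and 0 otherwise *)
Definition pcoord (R : ringType) k (pi : 'S_k) (x : 'rV[R]_k) (j : nat) : R :=
  match @insub nat (fun j => (j < k)%N) 'I_k j with
  | Some o => x 0 (pi o)
  | None => 0
  end.

(* alpha_i(x) for x ordered by pi, i in {0..k}:
   alpha_0 = 1 - x_{pi_1}, alpha_i = x_{pi_i} - x_{pi_{i+1}}, alpha_k = x_{pi_k} *)
Definition alpha (R : ringType) k (pi : 'S_k) (x : 'rV[R]_k) (i : nat) : R :=
  (if i == 0%N then 1 else pcoord pi x i.-1) - pcoord pi x i.

Definition Vuset (R : realFieldType) k (pi : 'S_k) (y u : 'rV[R]_k)
  : {fset 'rV[R]_k} :=
  [fset vert pi y (nat_of_ord i) | i in 'I_k.+1 & alpha pi (eabs u) i != 0].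

From HB Require Import structures.
From mathcomp Require Import all_boot all_order all_algebra all_fingroup.
From mathcomp Require Import finmap.
From mathcomp Require Import zify.
Set Implicit Arguments. Unset Strict Implicit. Unset Printing Implicit Defensive.
Import Order.TTheory GRing.Theory Num.Theory.
Local Open Scope ring_scope.
Local Open Scope fset_scope.

(* The barycentric coordinates of a point of P_{pi,y} are forced: if
   u = sum_i mu_i 1_{pi,i} (.) y with mu >= 0, then |u_{pi_j}| is the tail sum
   sum_{i >= j} mu_i (the vertex 1_{pi,i} (.) y has modulus 1 at pi_j exactly
   when j <= i), so mu_i = alpha_i(|u|).  Hence every W in V_{pi,y} with u in
   conv W contains each vertex with alpha_i(|u|) <> 0, and the weights of any
   convex combination over V_{pi,y} vanish outside V^u_{pi,y}. *)

Section Barycentric.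
Variables (R : numDomainType) (k : nat) (pi : 'S_k) (y : 'rV[R]_k).
Hypothesis y_sign : is_sign_vec y.

Lemma vert_perm (i : nat) (o : 'I_k) :
  vert pi y i 0 (pi o) = if (o < i)%N then y 0 (pi o) else 0.
Proof. by rewrite /vert /emul /ind !mxE permK; case: ifP; rewrite ?mul1r ?mul0r. Qed.

Lemma sign_vec_neq0 j : y 0 j != 0.
Proof. by case: (y_sign j) => ->; rewrite ?oppr_eq0 oner_eq0. Qed.

Lemma normr_sign_vec j : `|y 0 j| = 1.
Proof. by case: (y_sign j) => ->; rewrite ?normrN normr1. Qed.

Lemma vert_inj : injective (fun i : 'I_k.+1 => vert pi y i).
Proof.
suff vert_lt (i j : 'I_k.+1) : (i < j)%N -> vert pi y i <> vert pi y j.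
  move=> i j /= eij; case: (ltngtP i j) => [lt_ij|lt_ji|/val_inj //].
  - by case: (vert_lt _ _ lt_ij eij).
  - by case: (vert_lt _ _ lt_ji (esym eij)).
move=> lt_ij eij; have ik : (i < k)%N by have := ltn_ord j; lia.
have := congr1 (fun v : 'rV[R]_k => v 0 (pi (Ordinal ik))) eij.
rewrite /= !vert_perm /= ltnn lt_ij => /eqP.
by rewrite eq_sym (negbTE (sign_vec_neq0 _)).
Qed.

Section Combination.
Variable mu : 'I_k.+1 -> R.
Hypothesis mu_ge0 : forall i, 0 <= mu i.
Hypothesis mu_sum1 : \sum_i mu i = 1.

Let u := \sum_i mu i *: vert pi y i.
Let tail (j : nat) := \sum_(i < k.+1 | (j < i)%N) mu i.

Lemma comb_perm (o : 'I_k) : u 0 (pi o) = y 0 (pi o) * tail o.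
Proof.
rewrite summxE /tail mulr_sumr [RHS]big_mkcond; apply: eq_bigr => i _.
by rewrite mxE vert_perm; case: ifP; rewrite ?mulr0 // mulrC.
Qed.

Lemma pcoord_abs_comb (j : nat) : pcoord pi (eabs u) j = tail j.
Proof.
rewrite /pcoord; case: insubP => [o _ <-|j_ge].
  by rewrite mxE comb_perm normrM normr_sign_vec mul1r ger0_norm // sumr_ge0.
by rewrite /tail big1 // => i; have := ltn_ord i; lia.
Qed.

Lemma alpha_abs_comb (i : 'I_k.+1) : alpha pi (eabs u) i = mu i.
Proof.
rewrite /alpha !pcoord_abs_comb.
have -> : (if i == 0%N :> nat then 1 else tail i.-1)
          = \sum_(i' < k.+1 | (i <= i')%N) mu i'.
  case: eqP => [->|i_neq0]; first by rewrite -mu_sum1; apply: eq_bigl.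
  by apply: eq_bigl => j; apply/idP/idP; lia.
rewrite (bigD1 i) //= /tail (eq_bigl (fun i' : 'I_k.+1 => (i < i')%N)) ?addrK //.
by move=> j; rewrite ltn_neqAle andbC -val_eqE /= eq_sym.
Qed.

End Combination.
End Barycentric.

Lemma in_conv_fsubset (R : realFieldType) k (W W' : {fset 'rV[R]_k})
    (lam : 'rV[R]_k -> R) (u : 'rV[R]_k) :
  W' `<=` W -> (forall w, w \in W -> 0 <= lam w) ->
  \sum_(w <- W) lam w = 1 -> u = \sum_(w <- W) lam w *: w ->
  (forall w, w \in W -> w \notin W' -> lam w = 0) -> in_conv W' u.
Proof.
move=> sW'W lam_ge0 lam_sum1 -> lam0; exists lam; split.
  by move=> w /(fsubsetP sW'W) /lam_ge0.
rewrite !(big_fset_incl _ sW'W) //.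
by move=> w wW wW'; rewrite lam0 ?scale0r.
Qed.

Section ConvexHull.
Variables (R : realFieldType) (k : nat) (pi : 'S_k) (y : 'rV[R]_k).
Hypothesis y_sign : is_sign_vec y.

Lemma vert_in_Vset (i : 'I_k.+1) : vert pi y i \in Vset pi y.
Proof. by apply/imfsetP; exists i. Qed.

Lemma big_fsub_Vset (V : zmodType) (W : {fset 'rV[R]_k}) (F : 'rV[R]_k -> V) :
  W `<=` Vset pi y ->
  \sum_(w <- W) F w
    = \sum_(i < k.+1) (if vert pi y i \in W then F (vert pi y i) else 0).
Proof.
move=> sWV.
rewrite (eq_fbigr _ (G := fun w => if w \in W then F w else 0)); last by move=> w ->.
rewrite (big_fset_incl _ sWV); last by move=> w _ /negbTE ->.
rewrite /Vset big_imfset /=; last by move=> i j _ _; apply: vert_inj.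
by rewrite /enum_finmem big_enum.
Qed.

Lemma alpha_in_conv (W : {fset 'rV[R]_k}) (lam : 'rV[R]_k -> R) (u : 'rV[R]_k) :
  W `<=` Vset pi y -> (forall w, w \in W -> 0 <= lam w) ->
  \sum_(w <- W) lam w = 1 -> u = \sum_(w <- W) lam w *: w ->
  forall i : 'I_k.+1,
    alpha pi (eabs u) i = if vert pi y i \in W then lam (vert pi y i) else 0.
Proof.
move=> sWV lam_ge0 lam_sum1 ->.
pose mu (i : 'I_k.+1) := if vert pi y i \in W then lam (vert pi y i) else 0.
have mu_ge0 i : 0 <= mu i by rewrite /mu; case: ifP => // /lam_ge0.
have mu_sum1 : \sum_i mu i = 1 by rewrite -lam_sum1 big_fsub_Vset.
have -> : \sum_(w <- W) lam w *: w = \sum_i mu i *: vert pi y i.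
  rewrite big_fsub_Vset //; apply: eq_bigr => i _.
  by rewrite /mu; case: ifP; rewrite ?scale0r.
exact: alpha_abs_comb.
Qed.

Lemma Vuset_sub_Vset (u : 'rV[R]_k) : Vuset pi y u `<=` Vset pi y.
Proof. by apply/fsubsetP => w /imfsetP [i _ ->]; apply: vert_in_Vset. Qed.

Lemma Vuset_sub_conv (W : {fset 'rV[R]_k}) (u : 'rV[R]_k) :
  W `<=` Vset pi y -> in_conv W u -> Vuset pi y u `<=` W.
Proof.
move=> sWV [lam [lam_ge0 [lam_sum1 u_comb]]].
apply/fsubsetP => w /imfsetP [i /=].
rewrite inE (alpha_in_conv sWV lam_ge0 lam_sum1 u_comb).
by case: ifP => [vW _ ->|_] //; rewrite eqxx.
Qed.

Lemma in_conv_Vuset (u : 'rV[R]_k) :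
  in_conv (Vset pi y) u -> in_conv (Vuset pi y u) u.
Proof.
move=> [lam [lam_ge0 [lam_sum1 u_comb]]].
apply: (in_conv_fsubset (Vuset_sub_Vset u) lam_ge0 lam_sum1 u_comb).
move=> w /imfsetP [i _ ->] not_Vu.
have := alpha_in_conv (fsubset_refl _) lam_ge0 lam_sum1 u_comb i.
rewrite vert_in_Vset => <-.
by apply/eqP; apply: contraNT not_Vu => alpha_neq0; apply/imfsetP; exists i.
Qed.

End ConvexHull.

Theorem lemma11 (R : realFieldType) (k : nat) (u : 'rV[R]_k) (pi : 'S_k)
    (y : 'rV[R]_k) :
  (forall j, `|u 0 j| <= 1) ->
  is_sign_vec y ->
  in_conv (Vset pi y) u ->
  [/\ Vuset pi y u `<=` Vset pi y,
      in_conv (Vuset pi y u) u &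
      forall W : {fset 'rV[R]_k}, W `<=` Vset pi y -> in_conv W u ->
        (#|` Vuset pi y u| <= #|` W|)%N].
Proof.
(* The bound |u_j| <= 1 is implied by u being in conv V_{pi,y}. *)
move=> _ y_sign u_conv; split.
- exact: Vuset_sub_Vset.
- exact: in_conv_Vuset.
- move=> W sWV W_conv; exact: fsubset_leq_card (Vuset_sub_conv y_sign sWV W_conv).
Qed.
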